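(* Let $p\ge 1$ and let $Y:\overline{\mathcal{K}}_o^n\to\overline{\mathcal{K}}_o^n$ be an $L_p$-Minkowski valuation. Suppose that for every $n$-dimensional $K\in\overline{\mathcal{K}}_o^n$, every $\phi\in SL(n)$ and every $\lambda>0$ one has $Y(\phi K)=\phi\,YK$ (respectively $Y(\phi K)=\phi^{-t}YK$) and $Y(\lambda K)=\lambda^qYK$. Then these identities hold for every $K\in\overline{\mathcal{K}}_o^n$, i.e. $Y$ is $SL(n)$ covariant (respectively contravariant) and homogeneous of degree $q$ on all of $\overline{\mathcal{K}}_o^n$.
   Context: A convex body is a nonempty compact convex subset of $\mathbb{R}^n$. $\overline{\mathcal{K}}_o^n$ denotes the set of all convex bodies in $\mathbb{R}^n$ containing the origin (of any dimension). $h_K(x)=\max\{x\cdot y:y\in K\}$ is the support function; $\phi^{-t}$ is the inverse of the transpose of $\phi$. A map $Y:\overline{\mathcal{K}}_o^n\to\overline{\mathcal{K}}_o^n$ is an $L_p$-Minkowski valuation if $h_{Y(K\cup L)}^p+h_{Y(K\cap L)}^p=h_{YK}^p+h_{YL}^p$ whenever $K,L,K\cup L\in\overline{\mathcal{K}}_o^n$. *)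

(* classical reals. Points of R^n are functions nat -> R
   vanishing at coordinates >= n. *)
From Stdlib Require Import Reals ClassicalEpsilon.
Open Scope R_scope.

Definition vec := nat -> R.
Definition vset := vec -> Prop.

Definition inRn (n : nat) (x : vec) : Prop := forall i, (n <= i)%nat -> x i = 0.

Definition origin : vec := fun _ => 0.

Fixpoint rsum (n : nat) (f : nat -> R) : R :=
  match n with O => 0 | S m => rsum m f + f m end.

Definition dot (n : nat) (x y : vec) : R := rsum n (fun i => x i * y i).

(* n x n matrices, entries (i,j) with i,j < n are meaningful *)
Definition mat := nat -> nat -> R.

Fixpoint det (n : nat) (A : mat) : R :=
  match n with
  | O => 1
  | S m => rsum (S m) (fun j =>
      (-1) ^ j * A 0%nat j *
      det m (fun i k => A (S i) (if Nat.ltb k j then k else S k)))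
  end.

Definition SL (n : nat) (A : mat) : Prop := det n A = 1.

Definition mapply (n : nat) (A : mat) (x : vec) : vec :=
  fun i => if Nat.ltb i n then rsum n (fun j => A i j * x j) else 0.

Definition inv_transpose (n : nat) (A B : mat) : Prop :=
  forall i j, (i < n)%nat -> (j < n)%nat ->
    rsum n (fun k => A k i * B k j) = if Nat.eqb i j then 1 else 0.

Definition img (n : nat) (A : mat) (K : vset) : vset :=
  fun y => exists x, K x /\ y = mapply n A x.

Definition dilate (l : R) (K : vset) : vset :=
  fun y => exists x, K x /\ y = (fun i => l * x i).

Definition setU (K L : vset) : vset := fun x => K x \/ L x.
Definition setI (K L : vset) : vset := fun x => K x /\ L x.

Definition convex_body (n : nat) (K : vset) : Prop :=
  (forall x, K x -> inRn n x) /\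
  (exists x, K x) /\
  (forall x y t, K x -> K y -> 0 <= t <= 1 ->
     K (fun i => t * x i + (1 - t) * y i)) /\
  (exists M, forall x, K x -> forall i, Rabs (x i) <= M) /\
  (forall (u : nat -> vec) (x : vec), (forall k, K (u k)) ->
     (forall i, Un_cv (fun k => u k i) (x i)) -> K x).

Definition Ko (n : nat) (K : vset) : Prop := convex_body n K /\ K origin.

Definition lin_indep (n : nat) (v : nat -> vec) : Prop :=
  forall c : nat -> R,
    (forall j, (j < n)%nat -> rsum n (fun i => c i * v i j) = 0) ->
    forall i, (i < n)%nat -> c i = 0.

(* K is n-dimensional: its affine hull is all of R^n, i.e. it contains
   n+1 affinely independent points *)
Definition full_dim (n : nat) (K : vset) : Prop :=
  exists (x0 : vec) (v : nat -> vec),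
    K x0 /\ (forall i, (i < n)%nat -> K (v i)) /\
    lin_indep n (fun i j => v i j - x0 j).

Definition is_max_dot (n : nat) (K : vset) (x : vec) (v : R) : Prop :=
  (exists y, K y /\ dot n x y = v) /\ (forall y, K y -> dot n x y <= v).

Definition hsupp (n : nat) (K : vset) (x : vec) : R :=
  epsilon (inhabits 0) (is_max_dot n K x).

(* a^p for a >= 0, with 0^p = 0 (p >= 1) *)
Definition powr (a p : R) : R := if Rlt_dec 0 a then Rpower a p else 0.

Definition Lp_Minkowski_valuation (n : nat) (p : R) (Y : vset -> vset) : Prop :=
  (forall K, Ko n K -> Ko n (Y K)) /\
  (forall K L, Ko n K -> Ko n L -> Ko n (setU K L) ->
     forall x, inRn n x ->
       powr (hsupp n (Y (setU K L)) x) p + powr (hsupp n (Y (setI K L)) x) p =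
       powr (hsupp n (Y K) x) p + powr (hsupp n (Y L) x) p).

(* If K is not full-dimensional, pick a direction u transversal to its affine
   hull.  The prisms P = K + [0,1]u and Q = K + [-1,0]u, and their union
   K + [-1,1]u, gain one dimension, while P ∩ Q = K.  Since h_{φC}(x) = h_C(φ^t x),
   the L_p valuation identity for P, Q and the p-th power injectivity give
   h_{Y(φK)} = h_{ψ YK} as soon as Y(φC) = ψ YC holds for P, Q and P ∪ Q; a
   convex body is determined by its support function, so induction on the
   number of missing dimensions brings the identity down from full-dimensional
   bodies.  Homogeneity is the case φ = λ I, ψ = λ^q I, and the only property of
   φ that is used is injectivity, which for SL(n) comes from det φ = 1. *)

From Stdlib Require Import Reals Lra Lia Classical ClassicalEpsilon FunctionalExtensionality PropExtensionality.
Set Warnings "-notation-overridden,-ambiguous-paths".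
From mathcomp Require ssreflect ssrfun ssrbool eqtype ssrnat seq fintype bigop ssralg matrix Rstruct.
Open Scope R_scope.

Lemma set_ext (K L : vset) : (forall x, K x <-> L x) -> K = L.
Proof.
  intros H. apply functional_extensionality. intros x.
  apply propositional_extensionality. auto.
Qed.

Lemma rsum_ext n f g : (forall i, (i < n)%nat -> f i = g i) -> rsum n f = rsum n g.
Proof.
  induction n as [|n IH]; simpl; intros H; [reflexivity|].
  rewrite IH, H; [reflexivity|lia|intros; apply H; lia].
Qed.

Lemma rsum_plus n f g : rsum n (fun i => f i + g i) = rsum n f + rsum n g.
Proof. induction n; simpl; [ring|]. rewrite IHn. ring. Qed.

Lemma rsum_scal n a f : rsum n (fun i => a * f i) = a * rsum n f.
Proof. induction n; simpl; [ring|]. rewrite IHn. ring. Qed.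

Lemma rsum_lin n a b f g :
  rsum n (fun i => a * f i + b * g i) = a * rsum n f + b * rsum n g.
Proof. rewrite rsum_plus, !rsum_scal. reflexivity. Qed.

Lemma rsum_zero n : rsum n (fun _ => 0) = 0.
Proof. induction n; simpl; [ring|]. rewrite IHn. ring. Qed.

Lemma rsum_swap n m (f : nat -> nat -> R) :
  rsum n (fun i => rsum m (fun j => f i j)) = rsum m (fun j => rsum n (fun i => f i j)).
Proof.
  induction n; simpl.
  - symmetry. apply rsum_zero.
  - rewrite IHn, <- rsum_plus. reflexivity.
Qed.

Lemma rsum_pick n r F : (r < n)%nat ->
  rsum n F = F r + rsum n (fun i => if Nat.eqb i r then 0 else F i).
Proof.
  induction n as [|n IH]; intros Hr; [lia|]. simpl.
  destruct (Nat.eq_dec r n) as [->|Hne].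
  - rewrite Nat.eqb_refl, (rsum_ext n (fun i => if Nat.eqb i n then 0 else F i) F); [ring|].
    intros i Hi. destruct (Nat.eqb_spec i n); [lia|reflexivity].
  - rewrite IH by lia. destruct (Nat.eqb_spec n r); [lia|]. ring.
Qed.

Lemma rsum_delta n r a : (r < n)%nat -> rsum n (fun i => if Nat.eqb i r then a else 0) = a.
Proof.
  intros Hr. rewrite (rsum_pick n r), Nat.eqb_refl, (rsum_ext n _ (fun _ => 0)) by
    (auto; intros i _; destruct (Nat.eqb i r); reflexivity).
  rewrite rsum_zero. ring.
Qed.

Lemma rsum_le n f g : (forall i, (i < n)%nat -> f i <= g i) -> rsum n f <= rsum n g.
Proof.
  induction n as [|n IH]; simpl; intros H; [lra|].
  pose proof (IH (fun i Hi => H i ltac:(lia))). pose proof (H n ltac:(lia)). lra.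
Qed.

Lemma rsum_nonneg n f : (forall i, (i < n)%nat -> 0 <= f i) -> 0 <= rsum n f.
Proof. intros H. rewrite <- (rsum_zero n). apply rsum_le. auto. Qed.

Lemma rsum_abs n f : Rabs (rsum n f) <= rsum n (fun i => Rabs (f i)).
Proof.
  induction n; simpl; [rewrite Rabs_R0; lra|].
  eapply Rle_trans; [apply Rabs_triang|]. lra.
Qed.

Lemma rsum_term_le n f r : (r < n)%nat -> (forall i, (i < n)%nat -> 0 <= f i) -> f r <= rsum n f.
Proof.
  intros Hr H. rewrite (rsum_pick n r) by auto.
  assert (0 <= rsum n (fun i => if Nat.eqb i r then 0 else f i)); [|lra].
  apply rsum_nonneg. intros i Hi. destruct (Nat.eqb i r); [lra|auto].
Qed.

Definition vsub (x y : vec) : vec := fun i => x i - y i.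

Definition dist2 (n : nat) (x y : vec) : R := dot n (vsub x y) (vsub x y).

Lemma dot_origin_r n a : dot n a origin = 0.
Proof. unfold dot, origin. induction n; simpl; [|rewrite IHn]; ring. Qed.

Lemma dot_vsub_r n w x y : dot n w (vsub x y) = dot n w x - dot n w y.
Proof. unfold dot, vsub. induction n; simpl; [|rewrite IHn]; ring. Qed.

Lemma dot_self_nonneg n x : 0 <= dot n x x.
Proof. apply rsum_nonneg. intros. apply Rle_0_sqr. Qed.

Lemma dot_sub_scal_self n w d t :
  dot n (fun i => w i - t * d i) (fun i => w i - t * d i) =
  dot n w w - 2 * t * dot n w d + t * t * dot n d d.
Proof. unfold dot. induction n; simpl; [|rewrite IHn]; ring. Qed.

Lemma dist2_eq0 n x y : inRn n x -> inRn n y -> dist2 n x y = 0 -> x = y.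
Proof.
  intros Hx Hy H. apply functional_extensionality. intros i.
  destruct (Nat.lt_ge_cases i n) as [Hi|Hi]; [|rewrite Hx, Hy by auto; reflexivity].
  assert (Hsq : vsub x y i * vsub x y i <= 0).
  { rewrite <- H. apply (rsum_term_le n (fun i => vsub x y i * vsub x y i)); auto.
    intros. apply Rle_0_sqr. }
  unfold vsub in Hsq. nra.
Qed.

Lemma cv_const c : Un_cv (fun _ => c) c.
Proof.
  intros e He. exists 0%nat. intros. unfold Rdist. rewrite Rminus_diag, Rabs_R0. lra.
Qed.

Lemma cv_ext u v l : (forall k, u k = v k) -> Un_cv u l -> Un_cv v l.
Proof.
  intros H Hu e He. destruct (Hu e He) as [N HN]. exists N. intros k Hk. rewrite <- H. auto.
Qed.

Lemma cv_subseq u l (phi : nat -> nat) :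
  (forall k, (k <= phi k)%nat) -> Un_cv u l -> Un_cv (fun k => u (phi k)) l.
Proof.
  intros Hphi Hu e He. destruct (Hu e He) as [N HN]. exists N.
  intros k Hk. apply HN. specialize (Hphi k). lia.
Qed.

Lemma cv_rsum n (f : nat -> nat -> R) g :
  (forall j, (j < n)%nat -> Un_cv (fun k => f k j) (g j)) ->
  Un_cv (fun k => rsum n (fun j => f k j)) (rsum n g).
Proof.
  induction n; intros H; simpl; [apply cv_const|].
  apply CV_plus; [apply IHn; intros; apply H|apply H]; lia.
Qed.

Lemma cv_inv_succ : Un_cv (fun k => / INR (S k)) 0.
Proof. apply (cv_ext _ _ _ (fun k => f_equal Rinv (eq_sym (S_INR k))) RinvN_cv). Qed.

Lemma cv_ge_const u l c : (forall k, c <= u k) -> Un_cv u l -> c <= l.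
Proof. intros H. apply (Rle_cv_lim H (cv_const c)). Qed.

Lemma cv_le_const u l c : (forall k, u k <= c) -> Un_cv u l -> l <= c.
Proof. intros H Hu. apply (Rle_cv_lim H Hu (cv_const c)). Qed.

Lemma bolzano_weierstrass_subseq (u : nat -> R) a b : (forall k, a <= u k <= b) ->
  exists phi l, (forall k, (k <= phi k)%nat) /\ Un_cv (fun k => u (phi k)) l.
Proof.
  intros H.
  destruct (Bolzano_Weierstrass u (fun c => a <= c <= b) (compact_P3 a b) H) as [l Hl].
  assert (Hex : forall N, exists p, (N <= p)%nat /\ Rabs (u p - l) < / INR (S N)).
  { intros N. assert (Hp : 0 < / INR (S N)) by (apply Rinv_0_lt_compat, lt_0_INR; lia).
    destruct (Hl (disc l (mkposreal _ Hp)) N) as [p [Hp1 Hp2]].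
    - exists (mkposreal _ Hp). intros y Hy. exact Hy.
    - exists p. split; [exact Hp1|exact Hp2]. }
  destruct (choice _ Hex) as [phi Hphi].
  exists phi, l. split; [intros k; apply Hphi|].
  intros e He. destruct (archimed_cor1 e He) as [m [Hm1 Hm2]].
  exists m. intros k Hk. unfold Rdist. destruct (Hphi k) as [_ H2].
  assert (/ INR (S k) <= / INR m).
  { apply Rinv_le_contravar; [apply lt_0_INR; lia|apply le_INR; lia]. }
  lra.
Qed.

Lemma bolzano_weierstrass_coords (y : nat -> vec) M d : (forall k i, Rabs (y k i) <= M) ->
  exists phi x, (forall k, (k <= phi k)%nat) /\
    forall i, (i < d)%nat -> Un_cv (fun k => y (phi k) i) (x i).
Proof.
  intros HM. induction d as [|d IH].
  - exists (fun k => k), (fun _ => 0). split; intros; lia.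
  - destruct IH as [phi [x [Hphi Hx]]].
    destruct (bolzano_weierstrass_subseq (fun k => y (phi k) d) (-M) M) as [psi [l [Hpsi Hl]]].
    { intros k. pose proof (HM (phi k) d) as Hk. unfold Rabs in Hk.
      destruct (Rcase_abs (y (phi k) d)); lra. }
    exists (fun k => phi (psi k)), (fun i => if Nat.eqb i d then l else x i). split.
    + intros k. specialize (Hpsi k). specialize (Hphi (psi k)). lia.
    + intros i Hi. destruct (Nat.eqb_spec i d) as [->|Hne]; [exact Hl|].
      apply (cv_subseq (fun k => y (phi k) i)); auto. apply Hx. lia.
Qed.

Definition convex (C : vset) : Prop :=
  forall x y t, C x -> C y -> 0 <= t <= 1 -> C (fun i => t * x i + (1 - t) * y i).

Definition bounded (C : vset) : Prop := exists M, forall x, C x -> forall i, Rabs (x i) <= M.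

Definition seq_closed (C : vset) : Prop :=
  forall (u : nat -> vec) (x : vec), (forall k, C (u k)) ->
    (forall i, Un_cv (fun k => u k i) (x i)) -> C x.

Definition seq_continuous (f : vec -> R) : Prop :=
  forall (u : nat -> vec) (x : vec), (forall i, Un_cv (fun k => u k i) (x i)) ->
    Un_cv (fun k => f (u k)) (f x).

Section BodyProjections.
Variables (n : nat) (K : vset).
Hypothesis HK : Ko n K.

Lemma Ko_in x : K x -> inRn n x.
Proof. apply HK. Qed.

Lemma Ko_origin : K origin.
Proof. apply HK. Qed.

Lemma Ko_convex : convex K.
Proof. destruct HK as [[_ [_ [H _]]] _]. exact H. Qed.

Lemma Ko_bounded : bounded K.
Proof. destruct HK as [[_ [_ [_ [H _]]]] _]. exact H. Qed.

Lemma Ko_closed : seq_closed K.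
Proof. destruct HK as [[_ [_ [_ [_ H]]]] _]. exact H. Qed.

End BodyProjections.

Lemma Ko_intro n K : (forall x, K x -> inRn n x) -> K origin -> convex K -> bounded K ->
  seq_closed K -> Ko n K.
Proof. intros Hin Ho Hcv Hb Hcl. repeat split; eauto. Qed.

Lemma Ko_subseq_limit n C (y : nat -> vec) : Ko n C -> (forall k, C (y k)) ->
  exists phi x, (forall k, (k <= phi k)%nat) /\ C x /\
    forall i, Un_cv (fun k => y (phi k) i) (x i).
Proof.
  intros HC Hy. destruct (Ko_bounded n C HC) as [M HM].
  destruct (bolzano_weierstrass_coords y M n (fun k => HM _ (Hy k))) as [phi [x [Hphi Hx]]].
  set (x' := fun i => if Nat.ltb i n then x i else 0).
  assert (Hcv : forall i, Un_cv (fun k => y (phi k) i) (x' i)).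
  { intros i. unfold x'. destruct (Nat.ltb_spec i n); [auto|].
    apply (cv_ext (fun _ => 0)); [|apply cv_const].
    intros k. rewrite (Ko_in n C HC _ (Hy (phi k)) i) by lia. reflexivity. }
  exists phi, x'. repeat split; auto.
  apply (Ko_closed n C HC (fun k => y (phi k))); auto.
Qed.

Lemma Ko_attains_max n C f : Ko n C -> seq_continuous f ->
  (exists B, forall c, C c -> f c <= B) -> exists y, C y /\ forall z, C z -> f z <= f y.
Proof.
  intros HC Hf [B HB].
  set (E := fun r => exists c, C c /\ r = f c).
  assert (HEb : bound E) by (exists B; intros r [c [Hc ->]]; auto).
  assert (HEn : exists r, E r) by (exists (f origin), origin; split; [apply HC|reflexivity]).
  destruct (completeness E HEb HEn) as [s [Hub Hlub]].
  assert (Happrox : forall k, exists c, C c /\ s - / INR (S k) <= f c).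
  { intros k. apply NNPP. intros Hno.
    assert (0 < / INR (S k)) by (apply Rinv_0_lt_compat, lt_0_INR; lia).
    assert (s <= s - / INR (S k)); [|lra].
    apply Hlub. intros r [c [Hc ->]]. apply Rnot_lt_le. intros Hlt.
    apply Hno. exists c. split; [exact Hc|lra]. }
  destruct (choice _ Happrox) as [c Hc].
  destruct (Ko_subseq_limit n C c HC (fun k => proj1 (Hc k))) as [phi [y [Hphi [Hy Hcv]]]].
  exists y. split; [exact Hy|]. intros z Hz.
  assert (f z <= s) by (apply Hub; exists z; auto).
  assert (s <= f y); [|lra].
  apply (Rle_cv_lim (fun k => proj2 (Hc (phi k)))); [|apply Hf; exact Hcv].
  replace s with (s - 0) at 1 by ring.
  apply CV_minus; [apply cv_const|apply (cv_subseq _ _ _ Hphi cv_inv_succ)].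
Qed.

Lemma seq_continuous_dot n a : seq_continuous (dot n a).
Proof.
  intros u x Hu. apply cv_rsum. intros j _. apply CV_mult; [apply cv_const|apply Hu].
Qed.

Lemma seq_continuous_dist2 n z : seq_continuous (fun c => - dist2 n z c).
Proof.
  intros u x Hu. apply CV_opp. apply cv_rsum. intros j _.
  assert (Hj : Un_cv (fun k => vsub z (u k) j) (vsub z x j)) by
    (apply CV_minus; [apply cv_const|apply Hu]).
  apply CV_mult; exact Hj.
Qed.

Lemma hsupp_spec n C a : Ko n C -> is_max_dot n C a (hsupp n C a).
Proof.
  intros HC. unfold hsupp. apply epsilon_spec.
  destruct (Ko_attains_max n C (dot n a) HC (seq_continuous_dot n a)) as [y [Hy Hmax]].
  - destruct (Ko_bounded n C HC) as [M HM].
    exists (rsum n (fun i => Rabs (a i) * M)). intros c Hc. apply rsum_le. intros i _.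
    eapply Rle_trans; [apply Rle_abs|]. rewrite Rabs_mult.
    apply Rmult_le_compat_l; [apply Rabs_pos|auto].
  - exists (dot n a y). split; eauto.
Qed.

Lemma hsupp_nonneg n C a : Ko n C -> 0 <= hsupp n C a.
Proof.
  intros HC. rewrite <- (dot_origin_r n a).
  apply (hsupp_spec n C a HC), (Ko_origin n C HC).
Qed.

Lemma nearest_point_exists n C z : Ko n C ->
  exists y, C y /\ forall c, C c -> dist2 n z y <= dist2 n z c.
Proof.
  intros HC.
  destruct (Ko_attains_max n C _ HC (seq_continuous_dist2 n z)) as [y [Hy Hmax]].
  - exists 0. intros c _. pose proof (dot_self_nonneg n (vsub z c)). unfold dist2. lra.
  - exists y. split; [exact Hy|]. intros c Hc. pose proof (Hmax c Hc). lra.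
Qed.

Lemma nonpos_of_small_quadratic W E : 0 <= E ->
  (forall t, 0 < t <= 1 -> 2 * t * W <= t * t * E) -> W <= 0.
Proof.
  intros HE H. apply Rnot_lt_le. intros HW.
  set (t := W / (E + W)).
  assert (Ht : t * (E + W) = W) by (unfold t; field; lra).
  assert (0 < t) by (unfold t; apply Rdiv_lt_0_compat; lra).
  assert (t <= 1) by nra.
  specialize (H t ltac:(lra)). nra.
Qed.

Lemma nearest_point_obtuse n C z y : convex C -> C y ->
  (forall c, C c -> dist2 n z y <= dist2 n z c) ->
  forall c, C c -> dot n (vsub z y) c <= dot n (vsub z y) y.
Proof.
  intros Hcv Hy Hmin c Hc.
  set (w := vsub z y). set (d := vsub c y).
  assert (Hquad : forall t, 0 < t <= 1 -> 2 * t * dot n w d <= t * t * dot n d d).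
  { intros t Ht.
    pose proof (Hmin _ (Hcv c y t Hc Hy ltac:(lra))) as Hle.
    unfold dist2 in Hle.
    replace (vsub z (fun i => t * c i + (1 - t) * y i)) with (fun i => w i - t * d i) in Hle
      by (apply functional_extensionality; intros i; unfold w, d, vsub; ring).
    rewrite dot_sub_scal_self in Hle. fold w in Hle. lra. }
  pose proof (nonpos_of_small_quadratic _ _ (dot_self_nonneg n d) Hquad) as Hw.
  unfold d in Hw. rewrite dot_vsub_r in Hw. lra.
Qed.

Lemma Ko_incl_of_hsupp n C1 C2 : Ko n C1 -> Ko n C2 ->
  (forall a, inRn n a -> hsupp n C1 a = hsupp n C2 a) -> forall z, C2 z -> C1 z.
Proof.
  intros H1 H2 Hh z Hz. apply NNPP. intros Hnz.
  destruct (nearest_point_exists n C1 z H1) as [y [Hy Hmin]].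
  set (w := vsub z y).
  assert (Hwin : inRn n w).
  { intros i Hi. unfold w, vsub. rewrite (Ko_in n C2 H2 z Hz), (Ko_in n C1 H1 y Hy) by auto. ring. }
  assert (Hpos : 0 < dot n w w).
  { destruct (dot_self_nonneg n w) as [|H0]; [assumption|].
    exfalso. apply Hnz. replace z with y; [exact Hy|].
    symmetry. apply (dist2_eq0 n); [apply (Ko_in n C2 H2)|apply (Ko_in n C1 H1)|]; auto. }
  destruct (hsupp_spec n C1 w H1) as [[c [Hc Hcw]] _].
  destruct (hsupp_spec n C2 w H2) as [_ Hmax2].
  pose proof (nearest_point_obtuse n C1 z y (Ko_convex n C1 H1) Hy Hmin c Hc) as Hobt.
  pose proof (Hmax2 z Hz) as Hzw.
  rewrite <- Hh, <- Hcw in Hzw by exact Hwin.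
  assert (Hww : dot n w w = dot n w z - dot n w y) by apply dot_vsub_r.
  fold w in Hobt. lra.
Qed.

Lemma Ko_eq_of_hsupp n C1 C2 : Ko n C1 -> Ko n C2 ->
  (forall a, inRn n a -> hsupp n C1 a = hsupp n C2 a) -> C1 = C2.
Proof.
  intros H1 H2 Hh. apply set_ext. intros z. split.
  - apply (Ko_incl_of_hsupp n C2 C1); auto. intros a Ha. symmetry. auto.
  - apply (Ko_incl_of_hsupp n C1 C2); auto.
Qed.

Definition mapply_tr (n : nat) (A : mat) (x : vec) : vec :=
  fun j => if Nat.ltb j n then rsum n (fun i => A i j * x i) else 0.

Lemma mapply_inRn n A x : inRn n (mapply n A x).
Proof. intros i Hi. unfold mapply. destruct (Nat.ltb_spec i n); [lia|reflexivity]. Qed.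

Lemma mapply_tr_inRn n A x : inRn n (mapply_tr n A x).
Proof. intros i Hi. unfold mapply_tr. destruct (Nat.ltb_spec i n); [lia|reflexivity]. Qed.

Lemma mapply_convex_comb n A x y t :
  mapply n A (fun i => t * x i + (1 - t) * y i) =
  (fun i => t * mapply n A x i + (1 - t) * mapply n A y i).
Proof.
  apply functional_extensionality. intros i. unfold mapply. destruct (Nat.ltb i n); [|ring].
  rewrite <- rsum_lin. apply rsum_ext. intros. ring.
Qed.

Lemma mapply_origin n A : mapply n A origin = origin.
Proof.
  apply functional_extensionality. intros i. unfold mapply, origin.
  destruct (Nat.ltb i n); [|reflexivity].
  rewrite (rsum_ext n _ (fun _ => 0)) by (intros; ring). apply rsum_zero.
Qed.

Lemma dot_mapply n A x y : dot n x (mapply n A y) = dot n (mapply_tr n A x) y.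
Proof.
  unfold dot, mapply, mapply_tr.
  rewrite (rsum_ext n _ (fun i => rsum n (fun j => x i * A i j * y j))).
  2:{ intros i Hi. destruct (Nat.ltb_spec i n); [|lia].
      rewrite <- rsum_scal. apply rsum_ext. intros. ring. }
  rewrite rsum_swap. apply rsum_ext. intros j Hj. destruct (Nat.ltb_spec j n); [|lia].
  rewrite Rmult_comm, <- rsum_scal. apply rsum_ext. intros. ring.
Qed.

Lemma hsupp_img n A C x : hsupp n (img n A C) x = hsupp n C (mapply_tr n A x).
Proof.
  unfold hsupp. f_equal. apply functional_extensionality. intros v.
  apply propositional_extensionality. unfold is_max_dot, img. split.
  - intros [[y [[z [Hz ->]] Hv]] Hm]. split.
    + exists z. rewrite <- dot_mapply. auto.
    + intros y Hy. rewrite <- dot_mapply. apply Hm. eauto.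
  - intros [[y [Hy Hv]] Hm]. split.
    + exists (mapply n A y). rewrite dot_mapply. eauto.
    + intros y' [z [Hz ->]]. rewrite dot_mapply. auto.
Qed.

Lemma img_bounded n A K : K origin -> bounded K -> bounded (img n A K).
Proof.
  intros Ho [M HM].
  assert (HM0 : 0 <= M) by (pose proof (HM origin Ho 0%nat) as H0; unfold origin in H0;
    rewrite Rabs_R0 in H0; exact H0).
  set (B := rsum n (fun i => rsum n (fun j => Rabs (A i j)))).
  assert (HB : forall i, (i < n)%nat -> rsum n (fun j => Rabs (A i j)) <= B).
  { intros i Hi. apply (rsum_term_le n (fun i => rsum n (fun j => Rabs (A i j)))); auto.
    intros. apply rsum_nonneg. intros. apply Rabs_pos. }
  assert (HB0 : 0 <= B) by (apply rsum_nonneg; intros; apply rsum_nonneg; intros; apply Rabs_pos).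
  exists (M * B). intros y [x [Hx ->]] i. unfold mapply. destruct (Nat.ltb_spec i n).
  - eapply Rle_trans; [apply rsum_abs|].
    apply Rle_trans with (rsum n (fun j => M * Rabs (A i j))).
    + apply rsum_le. intros j _. rewrite Rabs_mult, Rmult_comm.
      apply Rmult_le_compat_r; [apply Rabs_pos|auto].
    + rewrite rsum_scal. apply Rmult_le_compat_l; auto.
  - rewrite Rabs_R0. apply Rmult_le_pos; auto.
Qed.

Lemma img_seq_closed n A K : Ko n K -> seq_closed (img n A K).
Proof.
  intros HK ys z Hys Hz.
  destruct (choice _ Hys) as [xs Hxs].
  destruct (Ko_subseq_limit n K xs HK (fun k => proj1 (Hxs k))) as [phi [x [Hphi [Hx Hcvx]]]].
  exists x. split; [exact Hx|]. apply functional_extensionality. intros i.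
  apply (UL_sequence (fun k => ys (phi k) i)); [apply (cv_subseq (fun k => ys k i)); auto|].
  apply (cv_ext (fun k => mapply n A (xs (phi k)) i)); [intros k; rewrite (proj2 (Hxs (phi k))); reflexivity|].
  unfold mapply. destruct (Nat.ltb i n); [|apply cv_const].
  apply cv_rsum. intros j _. apply CV_mult; [apply cv_const|auto].
Qed.

Lemma Ko_img n A K : Ko n K -> Ko n (img n A K).
Proof.
  intros HK. apply Ko_intro.
  - intros y [x [_ ->]]. apply mapply_inRn.
  - exists origin. split; [apply (Ko_origin n K HK)|symmetry; apply mapply_origin].
  - intros y1 y2 t [x1 [Hx1 ->]] [x2 [Hx2 ->]] Ht.
    exists (fun i => t * x1 i + (1 - t) * x2 i).
    split; [apply (Ko_convex n K HK); auto|symmetry; apply mapply_convex_comb].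
  - apply img_bounded; [apply (Ko_origin n K HK)|apply (Ko_bounded n K HK)].
  - apply img_seq_closed. exact HK.
Qed.

Definition left_inv (n : nat) (L A : mat) : Prop :=
  forall i k, (i < n)%nat -> (k < n)%nat ->
    rsum n (fun j => L i j * A j k) = if Nat.eqb i k then 1 else 0.

Definition lin_inj (n : nat) (A : mat) : Prop :=
  forall x y, inRn n x -> inRn n y -> mapply n A x = mapply n A y -> x = y.

Lemma mapply_left_inv n L A x : left_inv n L A -> inRn n x -> mapply n L (mapply n A x) = x.
Proof.
  intros HL Hx. apply functional_extensionality. intros i. unfold mapply at 1.
  destruct (Nat.ltb_spec i n) as [Hi|Hi]; [|symmetry; auto].
  rewrite (rsum_ext n _ (fun j => rsum n (fun k => L i j * A j k * x k))).
  2:{ intros j Hj. unfold mapply. destruct (Nat.ltb_spec j n); [|lia].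
      rewrite <- rsum_scal. apply rsum_ext. intros. ring. }
  rewrite rsum_swap, (rsum_ext n _ (fun k => if Nat.eqb k i then x i else 0)).
  - apply rsum_delta. exact Hi.
  - intros k Hk. rewrite (rsum_ext n _ (fun j => x k * (L i j * A j k))) by (intros; ring).
    rewrite rsum_scal, HL by auto.
    destruct (Nat.eqb_spec i k), (Nat.eqb_spec k i); subst; try lia; ring.
Qed.

Lemma lin_inj_of_left_inv n L A : left_inv n L A -> lin_inj n A.
Proof.
  intros HL x y Hx Hy H.
  rewrite <- (mapply_left_inv n L A x), <- (mapply_left_inv n L A y), H; auto.
Qed.

Lemma img_setU n A P Q : img n A (setU P Q) = setU (img n A P) (img n A Q).
Proof.
  apply set_ext. intros y. unfold img, setU. split.
  - intros [x [[Hx|Hx] ->]]; [left|right]; eauto.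
  - intros [[x [Hx ->]]|[x [Hx ->]]]; eauto.
Qed.

Lemma img_setI n A P Q : lin_inj n A ->
  (forall x, P x -> inRn n x) -> (forall x, Q x -> inRn n x) ->
  img n A (setI P Q) = setI (img n A P) (img n A Q).
Proof.
  intros HA HP HQ. apply set_ext. intros y. unfold img, setI. split.
  - intros [x [[Hx1 Hx2] ->]]. split; eauto.
  - intros [[x1 [Hx1 ->]] [x2 [Hx2 He]]]. exists x1. split; [split|reflexivity]; auto.
    replace x1 with x2; [exact Hx2|]. apply HA; auto.
Qed.

Module MatrixDet.
Import ssreflect ssrfun ssrbool eqtype ssrnat seq fintype bigop ssralg matrix Rstruct.
Import GRing.Theory.
Local Open Scope ring_scope.

Lemma big_ord_rsum (n : nat) (F : nat -> R) : (\sum_(j < n) F (nat_of_ord j))%R = rsum n F.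
Proof.
elim: n => [|n IH]; first by rewrite big_ord0.
by rewrite big_ord_recr /= IH.
Qed.

Definition tomx (n : nat) (A : mat) : 'M[R]_n := \matrix_(i < n, j < n) A i j.

Lemma det_tomx (n : nat) (A : mat) : det n A = \det (tomx n A).
Proof.
elim: n A => [|m IH] A; first by rewrite /= det_mx00.
have -> : det m.+1 A = rsum m.+1 (fun j => (-1) ^ j * A 0%N j *
    det m (fun i k => A (S i) (if Nat.ltb k j then k else S k))) by [].
rewrite -big_ord_rsum (expand_det_row _ ord0).
apply: eq_bigr => j _.
rewrite /cofactor IH !mxE.
have -> : row' ord0 (col' j (tomx m.+1 A)) =
    tomx m (fun i k => A (S i) (if Nat.ltb k j then k else S k)).
  apply/matrixP => i k; rewrite !mxE /= /bump.
  case: (Nat.ltb_spec k j) => H.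
  - by have -> : (j <= k)%N = false by apply/negbTE; rewrite -ltnNge; apply/ltP.
  - by have -> : (j <= k)%N = true by apply/leP.
have -> : ((-1) ^+ j)%R = pow (-1) j.
  by elim: (nat_of_ord j) => [|t IHt] //=; rewrite exprS IHt.
by rewrite mulrA [pow _ _ * _]mulrC.
Qed.

Lemma left_inv_of_det (n : nat) (A : mat) : det n A <> 0 -> exists L, left_inv n L A.
Proof.
case: n A => [|m] A H; first by exists (fun _ _ => 0) => i k Hi; lia.
set M := tomx m.+1 A.
have uM : M \in unitmx by rewrite unitmxE -det_tomx unitfE; apply/eqP.
exists (fun i j => invmx M (inord i) (inord j)) => i k Hi Hk.
have Hi' : (i < m.+1)%N by apply/ltP.
have Hk' : (k < m.+1)%N by apply/ltP.
rewrite -big_ord_rsum.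
have -> : (\sum_(j < m.+1) invmx M (inord i) (inord j) * A j k) =
    (invmx M *m M) (inord i) (inord k).
  by rewrite mxE; apply: eq_bigr => j _; rewrite inord_val /M /tomx mxE inordK.
rewrite mulVmx // mxE.
case: (Nat.eqb_spec i k) => [->|Hne]; first by rewrite eqxx.
by case: eqP => // /(congr1 val); rewrite /= !inordK.
Qed.

End MatrixDet.

Definition diag (l : R) : mat := fun i j => if Nat.eqb i j then l else 0.

Lemma dilate_img n l K : (forall x, K x -> inRn n x) -> dilate l K = img n (diag l) K.
Proof.
  intros Hin. apply set_ext. intros y. unfold dilate, img.
  assert (E : forall x, K x -> (fun i => l * x i) = mapply n (diag l) x).
  { intros x Hx. apply functional_extensionality. intros i. unfold mapply, diag.
    destruct (Nat.ltb_spec i n).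
    - rewrite (rsum_ext n _ (fun j => if Nat.eqb j i then l * x i else 0)).
      + symmetry. apply rsum_delta. assumption.
      + intros j _. destruct (Nat.eqb_spec i j), (Nat.eqb_spec j i); subst; try lia; ring.
    - rewrite (Hin x Hx i) by lia. ring. }
  split; intros [x [Hx ->]]; exists x; rewrite E; auto.
Qed.

Lemma left_inv_diag n l : l <> 0 -> left_inv n (diag (/ l)) (diag l).
Proof.
  intros Hl i k Hi Hk. unfold diag.
  rewrite (rsum_ext n _ (fun j => if Nat.eqb j i then (if Nat.eqb i k then 1 else 0) else 0)).
  - apply rsum_delta. assumption.
  - intros j _.
    destruct (Nat.eqb_spec i j), (Nat.eqb_spec j i), (Nat.eqb_spec j k), (Nat.eqb_spec i k);
      subst; try lia; field; auto.
Qed.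

Lemma left_inv_of_inv_transpose n A B : inv_transpose n A B -> left_inv n (fun i j => B j i) A.
Proof.
  intros H i k Hi Hk. rewrite (rsum_ext n _ (fun j => A j k * B j i)) by (intros; ring).
  rewrite H, Nat.eqb_sym by auto. reflexivity.
Qed.

Lemma powr_inj p a b : 0 < p -> 0 <= a -> 0 <= b -> powr a p = powr b p -> a = b.
Proof.
  intros Hp Ha Hb. unfold powr, Rpower.
  destruct (Rlt_dec 0 a), (Rlt_dec 0 b); intros H.
  - apply exp_inv in H. apply ln_inv; auto. apply Rmult_eq_reg_l with p; lra.
  - pose proof (exp_pos (p * ln a)). lra.
  - pose proof (exp_pos (p * ln b)). lra.
  - lra.
Qed.

Definition extrude (K : vset) (u : vec) (a b : R) : vset :=
  fun y => exists x s, K x /\ a <= s <= b /\ y = (fun i => x i + s * u i).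

Lemma extrude_contains K u a b x : a <= 0 <= b -> K x -> extrude K u a b x.
Proof.
  intros Hab Hx. exists x, 0. repeat split; auto; try lra.
  apply functional_extensionality. intros. ring.
Qed.

Lemma extrude_bounded n K u a b : inRn n u -> bounded K -> bounded (extrude K u a b).
Proof.
  intros Hu [M HM].
  set (Bu := rsum n (fun j => Rabs (u j))).
  assert (HBu : forall i, Rabs (u i) <= Bu).
  { intros i. assert (0 <= Bu) by (apply rsum_nonneg; intros; apply Rabs_pos).
    destruct (Nat.lt_ge_cases i n).
    - apply (rsum_term_le n (fun j => Rabs (u j))); auto. intros. apply Rabs_pos.
    - rewrite Hu, Rabs_R0 by auto. assumption. }
  exists (M + (Rabs a + Rabs b) * Bu). intros y [x [s [Hx [Hs ->]]]] i.
  eapply Rle_trans; [apply Rabs_triang|]. apply Rplus_le_compat; auto.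
  rewrite Rabs_mult. apply Rmult_le_compat; try apply Rabs_pos; auto.
  unfold Rabs. destruct (Rcase_abs s), (Rcase_abs a), (Rcase_abs b); lra.
Qed.

Lemma extrude_seq_closed K u a b : seq_closed K -> seq_closed (extrude K u a b).
Proof.
  intros Hcl ys z Hys Hz.
  assert (Hex : forall k, exists xs : vec * R,
    K (fst xs) /\ a <= snd xs <= b /\ ys k = (fun i => fst xs i + snd xs * u i)).
  { intros k. destruct (Hys k) as [x [s H]]. exists (x, s). exact H. }
  destruct (choice _ Hex) as [xs Hxs].
  destruct (bolzano_weierstrass_subseq (fun k => snd (xs k)) a b) as [phi [l [Hphi Hl]]];
    [intros k; apply Hxs|].
  exists (fun i => z i - l * u i), l. split; [|split].
  - apply (Hcl (fun k => fst (xs (phi k)))); [intros; apply Hxs|]. intros i.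
    apply (cv_ext (fun k => ys (phi k) i - snd (xs (phi k)) * u i)).
    { intros k. destruct (Hxs (phi k)) as [_ [_ ->]]. ring. }
    apply CV_minus; [apply (cv_subseq (fun k => ys k i)); auto|].
    apply CV_mult; [exact Hl|apply cv_const].
  - split; [apply (cv_ge_const _ _ _ (fun k => proj1 (proj1 (proj2 (Hxs (phi k))))) Hl)|].
    apply (cv_le_const _ _ _ (fun k => proj2 (proj1 (proj2 (Hxs (phi k))))) Hl).
  - apply functional_extensionality. intros. ring.
Qed.

Lemma Ko_extrude n K u a b : Ko n K -> inRn n u -> a <= 0 <= b -> Ko n (extrude K u a b).
Proof.
  intros HK Hu Hab. apply Ko_intro.
  - intros y [x [s [Hx [_ ->]]]] i Hi. rewrite (Ko_in n K HK x Hx i Hi), (Hu i Hi). ring.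
  - apply extrude_contains; [exact Hab|apply (Ko_origin n K HK)].
  - intros y1 y2 t [x1 [s1 [Hx1 [Hs1 ->]]]] [x2 [s2 [Hx2 [Hs2 ->]]]] Ht.
    exists (fun i => t * x1 i + (1 - t) * x2 i), (t * s1 + (1 - t) * s2).
    split; [apply (Ko_convex n K HK); auto|split; [nra|]].
    apply functional_extensionality. intros. ring.
  - apply (extrude_bounded n); [exact Hu|apply (Ko_bounded n K HK)].
  - apply extrude_seq_closed, (Ko_closed n K HK).
Qed.

Lemma extrude_cup K u : setU (extrude K u 0 1) (extrude K u (-1) 0) = extrude K u (-1) 1.
Proof.
  apply set_ext. intros y. unfold setU. split.
  - intros [[x [s [Hx [Hs ->]]]]|[x [s [Hx [Hs ->]]]]]; exists x, s; repeat split; auto; lra.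
  - intros [x [s [Hx [Hs ->]]]]. destruct (Rle_lt_dec 0 s); [left|right];
      exists x, s; repeat split; auto; lra.
Qed.

(* Rows i < r are the edges v i - x0 of points of K; rows i >= r are the
   auxiliary directions u i that complete them to a basis of R^n. *)
Definition frame (r : nat) (x0 : vec) (v u : nat -> vec) : nat -> vec :=
  fun i j => if Nat.ltb i r then v i j - x0 j else u i j.

Definition set_row (v : nat -> vec) (r : nat) (w : vec) : nat -> vec :=
  fun i => if Nat.eqb i r then w else v i.

Definition has_frame (n r : nat) (K : vset) : Prop :=
  exists x0 v u, K x0 /\ (forall i, (i < r)%nat -> K (v i)) /\ (forall i, inRn n (u i)) /\
    lin_indep n (frame r x0 v u).

Lemma lin_indep_ext n f g : (forall i j, (i < n)%nat -> (j < n)%nat -> g i j = f i j) ->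
  lin_indep n f -> lin_indep n g.
Proof.
  intros H Hf c Hc. apply Hf. intros j Hj. rewrite <- (Hc j Hj).
  apply rsum_ext. intros i Hi. rewrite H; auto.
Qed.

Lemma lin_indep_scale n f d : lin_indep n f -> (forall i, d i <> 0) ->
  lin_indep n (fun i j => d i * f i j).
Proof.
  intros Hf Hd c Hc i Hi.
  assert (Hcd : c i * d i = 0).
  { apply (Hf (fun i => c i * d i)); auto. intros j Hj. rewrite <- (Hc j Hj).
    apply rsum_ext. intros. ring. }
  destruct (Rmult_integral _ _ Hcd) as [|Hdi]; [assumption|]. exfalso. exact (Hd i Hdi).
Qed.

Lemma has_frame_0 n K : Ko n K -> has_frame n 0 K.
Proof.
  intros HK.
  exists origin, (fun _ => origin), (fun i j => if andb (Nat.eqb i j) (Nat.ltb j n) then 1 else 0).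
  split; [apply (Ko_origin n K HK)|split; [intros; lia|split]].
  - intros i j Hj. destruct (Nat.ltb_spec j n); [lia|]. rewrite Bool.andb_false_r. reflexivity.
  - intros c Hc i Hi. rewrite <- (Hc i Hi). unfold frame. simpl.
    rewrite (rsum_ext n _ (fun k => if Nat.eqb k i then c i else 0)).
    + symmetry. apply rsum_delta. assumption.
    + intros k Hk. destruct (Nat.eqb_spec k i), (Nat.ltb_spec i n); subst; try lia; simpl; ring.
Qed.

Lemma full_dim_of_has_frame n K : has_frame n n K -> full_dim n K.
Proof.
  intros [x0 [v [u [Hx0 [Hv [_ Hl]]]]]]. exists x0, v. repeat split; auto.
  eapply lin_indep_ext; [|exact Hl]. intros i j Hi Hj. unfold frame.
  destruct (Nat.ltb_spec i n); [reflexivity|lia].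
Qed.

Lemma has_frame_extrude n r K x0 v u a b s :
  K x0 -> (forall i, (i < r)%nat -> K (v i)) -> (forall i, inRn n (u i)) ->
  lin_indep n (frame r x0 v u) -> a <= 0 <= b -> a <= s <= b -> s <> 0 ->
  has_frame n (S r) (extrude K (u r) a b).
Proof.
  intros Hx0 Hv Hu Hl Hab Hs Hs0.
  exists x0, (set_row v r (fun j => x0 j + s * u r j)), u.
  split; [apply extrude_contains; auto|split; [|split; [exact Hu|]]].
  - intros i Hi. unfold set_row. destruct (Nat.eqb_spec i r).
    + exists x0, s. auto.
    + apply extrude_contains, Hv; auto. lia.
  - apply (lin_indep_ext n (fun i j => (if Nat.eqb i r then s else 1) * frame r x0 v u i j)).
    + intros i j _ _. unfold frame, set_row.
      destruct (Nat.eqb_spec i r), (Nat.ltb_spec i r), (Nat.ltb_spec i (S r)); subst; try lia; ring.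
    + apply lin_indep_scale; [exact Hl|]. intros i. destruct (Nat.eqb i r); [exact Hs0|lra].
Qed.

Lemma dependent_row_in_span n f g r : lin_indep n f -> (r < n)%nat -> ~ lin_indep n g ->
  (forall i j, i <> r -> g i j = f i j) ->
  exists al : nat -> R, al r = 0 /\
    forall j, (j < n)%nat -> g r j = rsum n (fun i => al i * f i j).
Proof.
  intros Hf Hr Hg Hgf. apply NNPP. intros Hno. apply Hg. intros c Hc.
  assert (Hsplit : forall j, (j < n)%nat ->
    c r * g r j + rsum n (fun i => if Nat.eqb i r then 0 else c i * f i j) = 0).
  { intros j Hj. pose proof (Hc j Hj) as E. rewrite (rsum_pick n r _ Hr) in E.
    etransitivity; [|exact E]. f_equal. apply rsum_ext. intros i _. destruct (Nat.eqb_spec i r); [reflexivity|rewrite Hgf; auto]. }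
  destruct (Req_dec (c r) 0) as [Hcr|Hcr].
  - apply Hf. intros j Hj. rewrite <- (Hsplit j Hj), Hcr, Rmult_0_l, Rplus_0_l.
    apply rsum_ext. intros i _. destruct (Nat.eqb_spec i r); [subst; rewrite Hcr|]; ring.
  - exfalso. apply Hno. exists (fun i => if Nat.eqb i r then 0 else - c i / c r).
    rewrite Nat.eqb_refl. split; [reflexivity|]. intros j Hj.
    rewrite (rsum_ext n _ (fun i => - / c r * (if Nat.eqb i r then 0 else c i * f i j))).
    + rewrite rsum_scal. pose proof (Hsplit j Hj) as Hs. set (S := rsum n _) in *.
      replace S with (- (c r * g r j)) by lra. field. exact Hcr.
    + intros i _. destruct (Nat.eqb i r); [ring|]. field. exact Hcr.
Qed.

(* The last hypothesis says that K lies in the affine span of x0 and the v i,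
   to which u r is transversal. *)
Lemma extrude_cap n r K x0 v u : (forall x, K x -> inRn n x) ->
  lin_indep n (frame r x0 v u) -> (r < n)%nat ->
  (forall w, K w -> ~ lin_indep n (frame (S r) x0 (set_row v r w) u)) ->
  setI (extrude K (u r) 0 1) (extrude K (u r) (-1) 0) = K.
Proof.
  intros Hin Hl Hr Hno. apply set_ext. intros y. split.
  - intros [[k1 [s [Hk1 [Hs E1]]]] [k2 [s' [Hk2 [Hs' E2]]]]].
    assert (Hspan : forall k, K k -> exists al : nat -> R, al r = 0 /\
      forall j, (j < n)%nat -> k j - x0 j = rsum n (fun i => al i * frame r x0 v u i j)).
    { intros k Hk. destruct (dependent_row_in_span n _ _ r Hl Hr (Hno k Hk)) as [al [Halr Hal]].
      - intros i j Hi. unfold frame, set_row.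
        destruct (Nat.eqb_spec i r), (Nat.ltb_spec i r), (Nat.ltb_spec i (S r)); try lia; reflexivity.
      - exists al. split; [exact Halr|]. intros j Hj. rewrite <- (Hal j Hj).
        unfold frame, set_row. rewrite Nat.eqb_refl.
        destruct (Nat.ltb_spec r (S r)); [reflexivity|lia]. }
    destruct (Hspan k1 Hk1) as [al [Halr Hal]].
    destruct (Hspan k2 Hk2) as [be [Hber Hbe]].
    assert (Hk12 : forall j, k1 j - k2 j = (s' - s) * u r j).
    { intros j. rewrite E1 in E2. pose proof (equal_f E2 j). lra. }
    assert (Hcomb : s - s' = 0).
    { set (c := fun i => if Nat.eqb i r then s - s' else al i - be i).
      replace (s - s') with (c r) by (unfold c; rewrite Nat.eqb_refl; reflexivity).
      apply Hl; [|exact Hr]. intros j Hj.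
      rewrite (rsum_ext n _ (fun i => 1 * (al i * frame r x0 v u i j)
          + (-1) * (be i * frame r x0 v u i j)
          + (if Nat.eqb i r then (s - s') * u r j else 0))).
      - rewrite rsum_plus, rsum_lin, rsum_delta, <- Hal, <- Hbe by assumption.
        pose proof (Hk12 j). lra.
      - intros i _. unfold c, frame. destruct (Nat.eqb_spec i r) as [->|].
        + rewrite Halr, Hber. destruct (Nat.ltb_spec r r); [lia|ring].
        + ring. }
    assert (s = 0) by lra. subst s y. replace (fun i => k1 i + 0 * u r i) with k1; [exact Hk1|].
    apply functional_extensionality. intros. ring.
  - intros Hy. split; apply extrude_contains; auto; lra.
Qed.

Definition intertwines (n : nat) (Y : vset -> vset) (M N : mat) (K : vset) : Prop :=
  Y (img n M K) = img n N (Y K).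

Section ExtensionFromFullDim.
Variables (n : nat) (p : R) (Y : vset -> vset) (M N : mat).
Hypothesis Hp : 1 <= p.
Hypothesis HY : Lp_Minkowski_valuation n p Y.
Hypothesis HM : lin_inj n M.

Lemma intertwines_of_cap_cup K P Q :
  Ko n P -> Ko n Q -> Ko n (setU P Q) -> setI P Q = K ->
  intertwines n Y M N P -> intertwines n Y M N Q -> intertwines n Y M N (setU P Q) ->
  intertwines n Y M N K.
Proof.
  intros HP HQ HW HI GP GQ GW. destruct HY as [HYK HV].
  assert (HK : Ko n K).
  { rewrite <- HI. apply Ko_intro.
    - intros x [Hx _]. apply (Ko_in n P HP x Hx).
    - split; [apply (Ko_origin n P HP)|apply (Ko_origin n Q HQ)].
    - intros x y t [] [] Ht. split; [apply (Ko_convex n P HP)|apply (Ko_convex n Q HQ)]; auto.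
    - destruct (Ko_bounded n P HP) as [B HB]. exists B. intros x [Hx _]. apply HB, Hx.
    - intros us x Hus Hx. split; [apply (Ko_closed n P HP us)|apply (Ko_closed n Q HQ us)];
        auto; intros k; apply Hus. }
  assert (HMI : setI (img n M P) (img n M Q) = img n M K).
  { rewrite <- HI, img_setI; auto; [apply (Ko_in n P HP)|apply (Ko_in n Q HQ)]. }
  assert (HMU : setU (img n M P) (img n M Q) = img n M (setU P Q)) by (symmetry; apply img_setU).
  apply (Ko_eq_of_hsupp n); [apply HYK, Ko_img, HK|apply Ko_img, HYK, HK|]. intros x Hx.
  pose proof (HV (img n M P) (img n M Q) (Ko_img n M P HP) (Ko_img n M Q HQ)) as V1.
  rewrite HMU, HMI in V1. specialize (V1 (Ko_img n M _ HW) x Hx).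
  pose proof (HV P Q HP HQ HW (mapply_tr n N x) (mapply_tr_inRn n N x)) as V2.
  rewrite HI in V2.
  unfold intertwines in GP, GQ, GW. rewrite GP, GQ, GW, !hsupp_img in V1.
  rewrite hsupp_img. apply (powr_inj p); [lra|apply hsupp_nonneg, HYK, Ko_img, HK|
    apply hsupp_nonneg, HYK, HK|lra].
Qed.

Hypothesis Hfull : forall K, Ko n K -> full_dim n K -> intertwines n Y M N K.

Lemma intertwines_of_has_frame k : forall r K, (r + k = n)%nat -> Ko n K -> has_frame n r K ->
  intertwines n Y M N K.
Proof.
  induction k as [|k IH]; intros r K Hrk HK HD.
  - apply Hfull; [exact HK|]. apply full_dim_of_has_frame. replace r with n in HD by lia. exact HD.
  - destruct HD as [x0 [v [u [Hx0 [Hv [Hu Hl]]]]]].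
    destruct (classic (exists w, K w /\ lin_indep n (frame (S r) x0 (set_row v r w) u)))
      as [[w [Hw Hlw]]|Hno].
    + apply (IH (S r)); [lia|exact HK|]. exists x0, (set_row v r w), u.
      repeat split; auto. intros i Hi. unfold set_row.
      destruct (Nat.eqb_spec i r); [exact Hw|apply Hv; lia].
    + assert (Hext : forall a b s, a <= 0 <= b -> a <= s <= b -> s <> 0 ->
        Ko n (extrude K (u r) a b) /\ intertwines n Y M N (extrude K (u r) a b)).
      { intros a b s Hab Hs Hs0. assert (HE : Ko n (extrude K (u r) a b)) by
          (apply Ko_extrude; auto).
        split; [exact HE|]. apply (IH (S r)); [lia|exact HE|].
        apply (has_frame_extrude n r K x0 v u a b s); auto. }
      destruct (Hext 0 1 1 ltac:(lra) ltac:(lra) ltac:(lra)) as [HP GP].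
      destruct (Hext (-1) 0 (-1) ltac:(lra) ltac:(lra) ltac:(lra)) as [HQ GQ].
      destruct (Hext (-1) 1 1 ltac:(lra) ltac:(lra) ltac:(lra)) as [HW GW].
      rewrite <- extrude_cup in HW, GW.
      apply (intertwines_of_cap_cup K _ _ HP HQ HW); auto.
      apply (extrude_cap n r K x0 v u (Ko_in n K HK) Hl); [lia|].
      intros w Hw Hlw. apply Hno. eauto.
Qed.

Lemma intertwines_of_full_dim K : Ko n K -> intertwines n Y M N K.
Proof. intros HK. apply (intertwines_of_has_frame n 0); auto. apply has_frame_0, HK. Qed.

End ExtensionFromFullDim.

Lemma dilate_covariant_of_full_dim n p q Y l : 1 <= p -> Lp_Minkowski_valuation n p Y -> 0 < l ->
  (forall K, Ko n K -> full_dim n K -> Y (dilate l K) = dilate (Rpower l q) (Y K)) ->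
  forall K, Ko n K -> Y (dilate l K) = dilate (Rpower l q) (Y K).
Proof.
  intros Hp HY Hl Hfull.
  assert (Hdil : forall K, Ko n K ->
    (Y (dilate l K) = dilate (Rpower l q) (Y K)) = intertwines n Y (diag l) (diag (Rpower l q)) K).
  { intros K HK. unfold intertwines.
    rewrite (dilate_img n l K (Ko_in n K HK)),
      (dilate_img n _ (Y K) (Ko_in n (Y K) (proj1 HY K HK))). reflexivity. }
  intros K HK. rewrite Hdil by exact HK.
  apply (intertwines_of_full_dim n p); auto.
  - apply (lin_inj_of_left_inv n (diag (/ l))), left_inv_diag. lra.
  - intros X HX HF. rewrite <- Hdil by exact HX. auto.
Qed.

Theorem lemma4p2 (n : nat) (p q : R) (Y : vset -> vset) :
  1 <= p ->
  Lp_Minkowski_valuation n p Y ->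
  (* SL(n) covariant case *)
  ((forall K, Ko n K -> full_dim n K ->
      (forall A, SL n A -> Y (img n A K) = img n A (Y K)) /\
      (forall l, 0 < l -> Y (dilate l K) = dilate (Rpower l q) (Y K))) ->
   forall K, Ko n K ->
      (forall A, SL n A -> Y (img n A K) = img n A (Y K)) /\
      (forall l, 0 < l -> Y (dilate l K) = dilate (Rpower l q) (Y K)))
  /\
  (* SL(n) contravariant case *)
  ((forall K, Ko n K -> full_dim n K ->
      (forall A B, SL n A -> inv_transpose n A B ->
         Y (img n A K) = img n B (Y K)) /\
      (forall l, 0 < l -> Y (dilate l K) = dilate (Rpower l q) (Y K))) ->
   forall K, Ko n K ->
      (forall A B, SL n A -> inv_transpose n A B ->
         Y (img n A K) = img n B (Y K)) /\
      (forall l, 0 < l -> Y (dilate l K) = dilate (Rpower l q) (Y K))).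
Proof.
  intros Hp HY. split; intros H K HK; split.
  - intros A HA.
    destruct (MatrixDet.left_inv_of_det n A) as [L HL]; [rewrite HA; exact R1_neq_R0|].
    apply (intertwines_of_full_dim n p Y A A); auto; [apply (lin_inj_of_left_inv n L), HL|].
    intros X HX HF. apply (proj1 (H X HX HF)), HA.
  - intros l Hl. apply (dilate_covariant_of_full_dim n p); auto. intros X HX HF. apply (proj2 (H X HX HF)), Hl.
  - intros A B HA HAB.
    apply (intertwines_of_full_dim n p Y A B); auto.
    + apply (lin_inj_of_left_inv n (fun i j => B j i)), left_inv_of_inv_transpose, HAB.
    + intros X HX HF. apply (proj1 (H X HX HF)); auto.
  - intros l Hl. apply (dilate_covariant_of_full_dim n p); auto. intros X HX HF. apply (proj2 (H X HX HF)), Hl.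
Qed.
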